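(* Let $\lambda_1,\dots,\lambda_n>0$, $S=\{\lambda_1,\dots,\lambda_n\}$ and $\Lambda=\big(\lambda_i\lambda_j+(\lambda_i\lambda_j)^{-1}\big)_{i,j=1}^n\in P(n)$. Then: if all $\lambda_i$ are equal, $I(\Lambda)=\lambda_1^2+\lambda_1^{-2}$; if $S=\{\lambda,\mu\}$ with $\lambda\neq\mu$, then $I(\Lambda)=\dfrac{(\lambda+\mu)^2}{1+\lambda^2\mu^2}$; if $S$ has more than two elements, $I(\Lambda)=0$. In particular $I(\Lambda)\neq0$ iff $S$ has at most two elements.
   Context: $P(n)$ denotes positive semidefinite complex $n\times n$ matrices. With $P$ the all-ones $n\times n$ matrix, $I(A)=\max\{\lambda\ge0: A-\lambda P\ge0\}$. *)

From HB Require Import structures.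
From mathcomp Require Import all_boot all_order all_algebra.
Set Implicit Arguments. Unset Strict Implicit. Unset Printing Implicit Defensive.
Import Order.TTheory GRing.Theory Num.Theory.
Local Open Scope ring_scope.

(* Complex scalars: an arbitrary numeric algebraically closed field C
   (e.g. complex R for R a real closed field, or algC). *)

Definition ctrmx (C : numClosedFieldType) m n (A : 'M[C]_(m, n)) : 'M[C]_(n, m) :=
  (map_mx Num.conj A)^T.

(* A is positive semidefinite: v^* A v >= 0 for every complex vector v
   (in a numClosedFieldType, 0 <= z means z is real and nonnegative). *)
Definition psd (C : numClosedFieldType) n (A : 'M[C]_n) : Prop :=
  forall v : 'cV[C]_n, 0 <= (ctrmx v *m A *m v) 0 0.

Definition onesmx (C : numClosedFieldType) n : 'M[C]_n := const_mx 1.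

Definition is_I (C : numClosedFieldType) n (A : 'M[C]_n) (x : C) : Prop :=
  [/\ 0 <= x, psd (A - x *: onesmx C n)
    & forall y : C, 0 <= y -> psd (A - y *: onesmx C n) -> y <= x].

Definition Lambda (C : numClosedFieldType) n (lam : 'I_n -> C) : 'M[C]_n :=
  \matrix_(i, j) (lam i * lam j + (lam i * lam j)^-1).

(* With the linear forms [X v = sum lam_k v_k], [Y v = sum lam_k^-1 v_k] and
   [E v = sum v_k], the quadratic form of [Lambda - t P] is
   [|X v|^2 + |Y v|^2 - t |E v|^2], so [I(Lambda)] is the best constant [t] in
   [t |E|^2 <= |X|^2 + |Y|^2].  If [lam] is constant, [E] is proportional to
   [X] and to [Y].  If [lam] takes the two values [l] and [m], then
   [1 = a t + b / t] at [t = l, m] for [a = 1/(l+m)], [b = lm/(l+m)], so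
   [E = a X + b Y], and Cauchy-Schwarz gives [t = 1/(a^2 + b^2)], attained
   because [X] and [Y] can be prescribed independently.  With three distinct
   values some [v] has [X v = Y v = 0] but [E v <> 0], forcing [t = 0]. *)

From mathcomp Require Import all_boot all_order all_algebra.
From mathcomp Require Import ring.
Import Order.TTheory GRing.Theory Num.Theory.
Local Open Scope ring_scope.

Set Implicit Arguments.
Unset Strict Implicit.

Lemma cauchy_schwarz2 (C : numClosedFieldType) (a b x y : C) :
  a \is Num.real -> b \is Num.real ->
  `|a * x + b * y| ^+ 2 <= (a ^+ 2 + b ^+ 2) * (`|x| ^+ 2 + `|y| ^+ 2).
Proof.
move=> /conj_Creal a_conj /conj_Creal b_conj; rewrite -subr_ge0.
have -> : (a ^+ 2 + b ^+ 2) * (`|x| ^+ 2 + `|y| ^+ 2) - `|a * x + b * y| ^+ 2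
    = `|b * x - a * y| ^+ 2.
  by rewrite !normCKC rmorphD rmorphB !rmorphM /= a_conj b_conj; ring.
exact: exprn_ge0.
Qed.

Section LambdaForm.
Context {C : numClosedFieldType} {n : nat}.

Definition lin_form (g : 'I_n -> C) (v : 'cV[C]_n) : C := \sum_k g k * v k 0.

Lemma lin_formD g u v : lin_form g (u + v) = lin_form g u + lin_form g v.
Proof. by rewrite -big_split; apply: eq_bigr => k _; rewrite mxE mulrDr. Qed.

Lemma lin_formZ g c v : lin_form g (c *: v) = c * lin_form g v.
Proof. by rewrite mulr_sumr; apply: eq_bigr => k _; rewrite mxE mulrCA. Qed.

Lemma lin_form_delta g i : lin_form g (delta_mx i 0) = g i.
Proof.
rewrite /lin_form (bigD1 i) //= mxE !eqxx mulr1 big1 ?addr0 // => k /negbTE ki.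
by rewrite mxE ki mulr0.
Qed.

Lemma lin_form_const g c v :
  (forall k, g k = c) -> lin_form g v = c * lin_form (fun _ => 1) v.
Proof. by move=> gc; rewrite mulr_sumr; apply: eq_bigr => k _; rewrite gc mul1r. Qed.

Context {lam : 'I_n -> C}.
Hypothesis lam_real : forall k, lam k \is Num.real.

Let X := lin_form lam.
Let Y := lin_form (fun k => (lam k)^-1).
Let E := lin_form (fun _ => 1).

(* [Lambda lam] is [lam lam^T + lam^-1 (lam^-1)^T] and [onesmx] is [1 1^T]. *)
Lemma Lambda_sub_quadE t v :
  (ctrmx v *m (Lambda lam - t *: onesmx C n) *m v) 0 0 =
  `|X v| ^+ 2 + `|Y v| ^+ 2 - t * `|E v| ^+ 2.
Proof.
rewrite !normCKC /X /Y /E /lin_form !rmorph_sum !mulr_suml mxE.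
under eq_bigr => j _ do rewrite !mxE mulr_suml.
rewrite exchange_big mulr_sumr -sumrN -!big_split; apply: eq_bigr => i _ /=.
rewrite !mulr_sumr -sumrN -!big_split; apply: eq_bigr => j _ /=.
have lamV_real : (lam i)^-1 \is Num.real by rewrite realV.
rewrite !mxE !rmorphM rmorph1 /= (conj_Creal (lam_real i)) (conj_Creal lamV_real).
by rewrite invfM; ring.
Qed.

Lemma psd_Lambda_subP t :
  psd (Lambda lam - t *: onesmx C n) <->
  forall v, t * `|E v| ^+ 2 <= `|X v| ^+ 2 + `|Y v| ^+ 2.
Proof.
split=> psdt v; first by rewrite -subr_ge0 -Lambda_sub_quadE.
by rewrite Lambda_sub_quadE subr_ge0.
Qed.

Lemma is_I_Lambda_witness x v :
  0 <= x -> psd (Lambda lam - x *: onesmx C n) ->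
  E v != 0 -> `|X v| ^+ 2 + `|Y v| ^+ 2 = x * `|E v| ^+ 2 ->
  is_I (Lambda lam) x.
Proof.
move=> x_ge0 psdx Ev_neq0 eq_v; split=> // y _ /psd_Lambda_subP/(_ v).
by rewrite eq_v ler_pM2r // exprn_gt0 // normr_gt0.
Qed.

Lemma is_I_Lambda_const l : (0 < n)%N -> (forall k, lam k = l) ->
  is_I (Lambda lam) (l ^+ 2 + l ^- 2).
Proof.
move=> n_gt0 lam_l; pose i0 := Ordinal n_gt0.
have l_real : l \is Num.real by rewrite -(lam_l i0).
have lV_real : l^-1 \is Num.real by rewrite realV.
have formE v : `|X v| ^+ 2 + `|Y v| ^+ 2 = (l ^+ 2 + l ^- 2) * `|E v| ^+ 2.
  have lamV_l k : (lam k)^-1 = l^-1 by rewrite lam_l.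
  rewrite /X /Y (lin_form_const _ lam_l) (lin_form_const _ lamV_l).
  by rewrite !normrM !exprMn (real_normK l_real) (real_normK lV_real) exprVn mulrDl.
apply: (is_I_Lambda_witness (v := delta_mx i0 0)); rewrite ?formE //.
- by rewrite addr_ge0 ?invr_ge0 ?real_exprn_even_ge0.
- by apply/(psd_Lambda_subP (l ^+ 2 + l ^- 2)) => v; rewrite formE.
- by rewrite /E lin_form_delta oner_neq0.
Qed.

Lemma is_I_Lambda_distinct3 i j k : (forall k, lam k != 0) ->
  lam i != lam j -> lam j != lam k -> lam k != lam i -> is_I (Lambda lam) 0.
Proof.
move=> lam_neq0 ij jk ki.
set x := lam i; set y := lam j; set z := lam k.
have [x0 y0 z0] : [/\ x != 0, y != 0 & z != 0] by rewrite !lam_neq0.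
(* The coefficients span the kernel of the system [X v = 0], [Y v = 0] on [{i, j, k}]. *)
pose v : 'cV[C]_n := (x * (y ^+ 2 - z ^+ 2)) *: delta_mx i 0
  + (y * (z ^+ 2 - x ^+ 2)) *: delta_mx j 0 + (z * (x ^+ 2 - y ^+ 2)) *: delta_mx k 0.
have Xv : X v = 0 by rewrite /X !lin_formD !lin_formZ !lin_form_delta -/x -/y -/z; ring.
have Yv : Y v = 0.
  by rewrite /Y !lin_formD !lin_formZ !lin_form_delta -/x -/y -/z; field; rewrite x0 y0 z0.
have Ev : E v = (x - y) * (y - z) * (z - x).
  by rewrite /E !lin_formD !lin_formZ !lin_form_delta; ring.
apply: (is_I_Lambda_witness (v := v)) => //.
- by apply/(psd_Lambda_subP 0) => w; rewrite mul0r addr_ge0 ?exprn_ge0.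
- by rewrite Ev !mulf_neq0 // subr_eq0 // eq_sym.
- by rewrite Xv Yv normr0 expr0n mul0r addr0.
Qed.

Lemma is_I_Lambda_two l m i j : 0 < l -> 0 < m -> l != m ->
  (forall k, lam k = l \/ lam k = m) -> lam i = l -> lam j = m ->
  is_I (Lambda lam) ((l + m) ^+ 2 / (1 + l ^+ 2 * m ^+ 2)).
Proof.
move=> l_gt0 m_gt0 lm lam_lm lam_i lam_j.
have [l0 m0] : l != 0 /\ m != 0 by rewrite !gt_eqF.
have lm_gt0 : 0 < l + m by rewrite addr_gt0.
have lm0 : l + m != 0 by rewrite gt_eqF.
have l2m2 : l ^+ 2 - m ^+ 2 != 0.
  by rewrite subr_sqr mulf_neq0 ?subr_eq0.
pose a := (l + m)^-1; pose b := l * m / (l + m).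
have a_gt0 : 0 < a by rewrite invr_gt0.
have b_gt0 : 0 < b by rewrite divr_gt0 ?mulr_gt0.
pose s := a ^+ 2 + b ^+ 2.
have s_gt0 : 0 < s by rewrite addr_gt0 ?exprn_gt0.
have -> : (l + m) ^+ 2 / (1 + l ^+ 2 * m ^+ 2) = s^-1.
  by rewrite /s /a /b; field; rewrite lm0 gt_eqF // addr_gt0 ?ltr01 ?exprn_gt0 ?mulr_gt0.
have Ev v : E v = a * X v + b * Y v.
  rewrite /E /X /Y /lin_form !mulr_sumr -big_split; apply: eq_bigr => k _ /=.
  by case: (lam_lm k) => ->; rewrite /a /b; field; rewrite ?l0 ?m0 lm0.
(* [alpha], [beta] solve [l alpha + m beta = a] and [alpha / l + beta / m = b]. *)
pose alpha := (a * l - b * l * m ^+ 2) / (l ^+ 2 - m ^+ 2).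
pose beta := (b * l ^+ 2 * m - a * m) / (l ^+ 2 - m ^+ 2).
pose v : 'cV[C]_n := alpha *: delta_mx i 0 + beta *: delta_mx j 0.
have Xv : X v = a.
  by rewrite /X !lin_formD !lin_formZ !lin_form_delta lam_i lam_j /alpha /beta; field.
have Yv : Y v = b.
  rewrite /Y !lin_formD !lin_formZ !lin_form_delta lam_i lam_j /alpha /beta /b.
  by field; rewrite lm0 m0 l2m2 l0.
have [a_real b_real] : a \is Num.real /\ b \is Num.real by rewrite !gtr0_real.
apply: (is_I_Lambda_witness (v := v)).
- by rewrite invr_ge0 ltW.
- apply/(psd_Lambda_subP s^-1) => w; rewrite Ev ler_pdivrMl //.
  exact: cauchy_schwarz2.
- by rewrite Ev Xv Yv gt_eqF // addr_gt0 ?mulr_gt0.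
- rewrite Ev Xv Yv !real_normK ?gtr0_real // -!expr2 -/s.
  by rewrite expr2 mulKf ?gt_eqF.
Qed.
End LambdaForm.

Lemma is_I_unique (C : numClosedFieldType) n (A : 'M[C]_n) x y :
  is_I A x -> is_I A y -> x = y.
Proof.
move=> [x_ge0 psdx max_x] [y_ge0 psdy max_y].
by apply/le_anti/andP; split; [apply: max_y | apply: max_x].
Qed.

Section DistinctValues.
Context {I : finType} {T : eqType} {f : I -> T}.

Lemma mem_undup_codom y : y \in undup (codom f) -> exists i, f i = y.
Proof. by rewrite mem_undup => /codomP [i ->]; exists i. Qed.

Lemma undup_codom_gt2 : (2 < size (undup (codom f)))%N ->
  exists i j k, [/\ f i != f j, f j != f k & f k != f i].
Proof.
have := undup_uniq (codom f); have := @mem_undup_codom.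
case: (undup (codom f)) => [|a [|b [|c s]]] //= mem_s uniq_s _.
have [i fi] := mem_s a (mem_head _ _).
have [j fj] : exists j, f j = b by apply: mem_s; rewrite !inE eqxx orbT.
have [k fk] : exists k, f k = c by apply: mem_s; rewrite !inE eqxx !orbT.
move: uniq_s; rewrite !inE !negb_or => /and4P [/and3P [ab ac _] /andP [bc _] _ _].
by exists i, j, k; rewrite fi fj fk [c == a]eq_sym.
Qed.

Lemma undup_codom_le2 : (0 < #|I|)%N -> (size (undup (codom f)) <= 2)%N ->
  (exists a, forall i, f i = a) \/
  exists a b i j, [/\ a != b, forall k, f k = a \/ f k = b, f i = a & f j = b].
Proof.
move=> I_gt0; have := undup_uniq (codom f); have := @mem_undup_codom.
have f_in k : f k \in undup (codom f) by rewrite mem_undup codom_f.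
case: (undup (codom f)) f_in => [|a [|b [|c s]]] //= f_in mem_s uniq_s _.
- by have [i _] := card_gt0P I_gt0; have := f_in i.
- by left; exists a => k; apply/eqP; rewrite -mem_seq1 f_in.
right; have [i fi] := mem_s a (mem_head _ _).
have [j fj] : exists j, f j = b by apply: mem_s; rewrite !inE eqxx orbT.
exists a, b, i, j; split=> //; first by move: uniq_s; rewrite inE andbT.
by move=> k; have := f_in k; rewrite !inE => /orP [] /eqP; [left | right].
Qed.
End DistinctValues.

Theorem mainTheorem13 (C : numClosedFieldType) (n : nat) (lam : 'I_n -> C)
    (hn : (0 < n)%N) (hpos : forall i, 0 < lam i) :
  (forall l : C, (forall i, lam i = l) ->
     is_I (Lambda lam) (l ^+ 2 + l ^- 2)) /\
  (forall l m : C, l != m ->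
     (forall i, lam i = l \/ lam i = m) ->
     (exists i, lam i = l) -> (exists j, lam j = m) ->
     is_I (Lambda lam) ((l + m) ^+ 2 / (1 + l ^+ 2 * m ^+ 2))) /\
  ((2 < size (undup (codom lam)))%N -> is_I (Lambda lam) 0) /\
  ((exists x, is_I (Lambda lam) x /\ x != 0) <->
     (size (undup (codom lam)) <= 2)%N).
Proof.
have lam_real k : lam k \is Num.real by rewrite gtr0_real.
have lam_neq0 k : lam k != 0 by rewrite gt_eqF.
have I_two l m i j : l != m -> (forall k, lam k = l \/ lam k = m) ->
    lam i = l -> lam j = m -> is_I (Lambda lam) ((l + m) ^+ 2 / (1 + l ^+ 2 * m ^+ 2)).
  move=> lm lam_lm lam_i lam_j.
  by apply: (is_I_Lambda_two lam_real _ _ lm lam_lm lam_i lam_j); rewrite -?lam_i -?lam_j.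
have I_gt2 : (2 < size (undup (codom lam)))%N -> is_I (Lambda lam) 0.
  move=> lam_gt2; have [i [j [k [ij jk ki]]]] := undup_codom_gt2 lam_gt2.
  exact: (is_I_Lambda_distinct3 lam_real lam_neq0 ij jk ki).
split; first by move=> l; apply: is_I_Lambda_const lam_real l hn.
split; first by move=> l m lm lam_lm [i lam_i] [j lam_j]; apply: I_two lam_i lam_j.
split=> //; split.
- move=> [x [Ix x_neq0]]; rewrite leqNgt; apply/negP => /I_gt2 I0.
  by move: x_neq0; rewrite (is_I_unique Ix I0) eqxx.
- have card_gt0 : (0 < #|'I_n|)%N by rewrite card_ord.
  move=> /(undup_codom_le2 card_gt0) [[l lam_l] | [l [m [i [j [lm lam_lm lam_i lam_j]]]]]].
  + have l_gt0 : 0 < l by rewrite -(lam_l (Ordinal hn)).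
    exists (l ^+ 2 + l ^- 2); split; first exact: is_I_Lambda_const lam_real l hn lam_l.
    by rewrite gt_eqF // addr_gt0 ?invr_gt0 ?exprn_gt0.
  + have [l_gt0 m_gt0] : 0 < l /\ 0 < m by rewrite -lam_i -lam_j.
    exists ((l + m) ^+ 2 / (1 + l ^+ 2 * m ^+ 2)); split; first exact: I_two lam_i lam_j.
    by rewrite gt_eqF // divr_gt0 ?exprn_gt0 ?addr_gt0 ?ltr01 ?mulr_gt0 ?exprn_gt0.
Qed.
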